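(* Let $p$ be a prime, $\mathbb{F}=\mathbb{F}_p$, let $m>k\ge1$ and $s\ge1$ be integers, and let $S$ be a collection (possibly with repetitions) of $k$-dimensional linear subspaces of $\mathbb{F}^m$. If $|S|\ge s^{k+1}p^{\frac{k^2+k-2}{2}}$, then $S$ contains a sunflower of size at least $s$.
   Context: A collection $V_1,\dots,V_s$ of (possibly repeated) subspaces of $\mathbb{F}^m$ is a sunflower if, with $C=\bigcap_{j}V_j$, one has $V_i\cap V_{i'}=C$ for all $i\ne i'$. *)

From HB Require Import structures.
From mathcomp Require Import all_boot all_order all_algebra.
Set Implicit Arguments. Unset Strict Implicit. Unset Printing Implicit Defensive.
Import GRing.Theory.

Definition sunflower (K : fieldType) (vT : vectType K) (N : nat)
  (V : 'I_N -> {vspace vT}) (I : {set 'I_N}) : Prop :=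
  forall i j, i \in I -> j \in I -> i != j ->
    (V i :&: V j)%VS = (\bigcap_(l in I) V l)%VS.

From HB Require Import structures.
From mathcomp Require Import all_boot all_order all_algebra.
From mathcomp Require Import finfield zify.

(* Induction on the common codimension of the members over a subspace C that
   they all contain.  A maximal subfamily T whose members pairwise meet exactly
   in C is a sunflower, so we may assume #|T| < s; then every member meets some
   member of T strictly beyond C.  In codimension one this forces equality, and
   pigeonholing over T gives s equal spaces.  In codimension d + 1 >= 2 every
   member S i contains a nonzero vector w of a complement S t :\: C (t in T);
   pigeonholing over the fewer than s q^(d+1) pairs (t, w), with q the size of
   the field, gives many members containing C + <[w]>, of codimension d.  The
   thresholds s^2 and s q^(d+1) multiply to s^(k+1) q^((k^2+k-2)/2). *)

Set Implicit Arguments.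
Unset Strict Implicit.
Unset Printing Implicit Defensive.

Section Pigeonhole.
Variables (I J : finType) (A : {set I}) (P : {set J}) (Q : I -> J -> bool).
Hypothesis covered : forall i, i \in A -> exists2 y, y \in P & Q i y.

Lemma leq_card_cover_rel n :
  (forall y, y \in P -> #|[set i in A | Q i y]| <= n) -> #|A| <= #|P| * n.
Proof.
move=> small; rewrite -sum1_card.
apply: (@leq_trans (\sum_(i in A) \sum_(y in P | Q i y) 1)).
  apply: leq_sum => i /covered[y yP Qiy].
  by rewrite (bigD1 y) ?yP //= leq_addr.
rewrite (exchange_big_dep (mem P)) => [|i y _ /andP[]//] /=.
rewrite -sum_nat_const leq_sum // => y yP; apply: leq_trans (small y yP).
by rewrite -sum1_card; apply/eq_leq/eq_bigl => i; rewrite inE yP.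
Qed.

Lemma pigeonhole_rel n :
  #|P| * n < #|A| -> exists2 y, y \in P & n < #|[set i in A | Q i y]|.
Proof.
move=> big; have [/exists_inP[y yP many] | /exists_inP crowded] :=
  boolP [exists y in P, n < #|[set i in A | Q i y]|]; first by exists y.
move: big; rewrite ltnNge leq_card_cover_rel // => y yP.
by rewrite leqNgt; apply: contra_notN crowded => many; exists y.
Qed.

End Pigeonhole.

Lemma card_pairs_dep (I J : finType) (T : {set I}) (F : I -> {pred J}) :
  #|[set y : I * J | (y.1 \in T) && (y.2 \in F y.1)]| = \sum_(t in T) #|F t|.
Proof.
rewrite -sum1_card (eq_bigl (fun y => (y.1 \in T) && (y.2 \in F y.1))) => [|y];
  last by rewrite inE.
rewrite -(pair_big_dep (mem T) (fun t w => w \in F t) (fun _ _ => 1)) /=.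
by apply: eq_bigr => t _; rewrite sum1_card.
Qed.

Section VectorDimension.
Variables (K : fieldType) (vT : vectType K).
Implicit Types (C U V : {vspace vT}) (w : vT).

Lemma dimv_add_line C w : w \notin C -> \dim (C + <[w]>) = (\dim C).+1.
Proof.
move=> wNC; have w_neq0 : (w != 0)%R by apply: contraNneq wNC => ->; rewrite mem0v.
have dim_w : \dim <[w]> = 1 by rewrite dim_vline w_neq0.
have : \dim (C :&: <[w]>) < 1.
  rewrite -dim_w (ltn_leqif (dimv_leqif_sup (capvSr C _))).
  by rewrite subv_cap subvv andbT -memvE.
by have := dimv_sum_cap C <[w]>; rewrite dim_w; lia.
Qed.

Lemma capv_diffv_neq0 U V C :
  (C <= V)%VS -> \dim C < \dim (U :&: V) -> (U :&: (V :\: C))%VS != 0%VS.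
Proof.
move=> CV ltC; rewrite -dimv_eq0 -lt0n.
have := dimv_sum_cap (U :&: V) (V :\: C).
have := dimv_cap_compl V C; rewrite (capv_idPr CV).
have : \dim (U :&: V + (V :\: C)) <= \dim V.
  by apply: dimvS; rewrite subv_add capvSr diffvSl.
have : \dim (U :&: V :&: (V :\: C)) <= \dim (U :&: (V :\: C)).
  by apply/dimvS/capvS; [exact: capvSl | exact: subvv].
lia.
Qed.

End VectorDimension.

Section Sunflowers.
Variables (K : fieldType) (vT : vectType K) (N : nat) (S : 'I_N -> {vspace vT}).
Implicit Types (C X : {vspace vT}) (A I T : {set 'I_N}).

Lemma sunflower_const I X : {in I, forall i, S i = X} -> sunflower S I.
Proof.
move=> SX i j iI jI _; rewrite !SX // capvv; apply/eqP; rewrite eqEsubv.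
apply/andP; split; first by apply/subv_bigcapP => l /SX->.
by apply: (@bigcapv_inf _ _ _ i); rewrite ?SX.
Qed.

Definition pairwise_cap C T : bool :=
  [forall i in T, forall j in T, (i != j) ==> (S i :&: S j == C)%VS].

Lemma pairwise_capP C T :
  reflect {in T &, forall i j, i != j -> (S i :&: S j)%VS = C} (pairwise_cap C T).
Proof.
apply: (iffP forall_inP) => [capT i j iT jT ij | capT i iT].
  by apply/eqP; move/forall_inP: (capT i iT) => /(_ j jT)/implyP; apply.
by apply/forall_inP => j jT; apply/implyP => ij; rewrite capT.
Qed.

Lemma sunflower_of_pairwise_cap C T :
  {in T, forall i, (C <= S i)%VS} -> pairwise_cap C T -> sunflower S T.
Proof.
move=> CS /pairwise_capP capT i j iT jT ij; rewrite capT //.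
apply/eqP; rewrite eqEsubv; apply/andP; split; first exact/subv_bigcapP.
rewrite -(capT i j) // subv_cap.
by rewrite (@bigcapv_inf _ _ _ i) ?(@bigcapv_inf _ _ _ j).
Qed.

Lemma exists_maximal_pairwise_cap C A :
    {in A, forall i, (C <= S i)%VS /\ \dim C < \dim (S i)} ->
  exists T, [/\ T \subset A, pairwise_cap C T &
    {in A, forall i, exists2 t, t \in T & \dim C < \dim (S i :&: S t)}].
Proof.
move=> hA.
have [T maxT] : {T | maxset [pred B : {set 'I_N} | (B \subset A) && pairwise_cap C B] T}.
  apply: ex_maxset; exists set0; rewrite /= sub0set.
  by apply/pairwise_capP => i; rewrite inE.
have /andP[TA capT] := maxsetp maxT.
exists T; split=> // i iA; have [CSi ltCSi] := hA i iA.
have [iT | iNT] := boolP (i \in T); first by exists i; rewrite ?capvv.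
have [/exists_inP[t tT capNC] | /exists_inP capC] :=
  boolP [exists t in T, (S i :&: S t)%VS != C].
  exists t => //; have [CSt _] := hA t (subsetP TA t tT).
  have CSit : (C <= S i :&: S t)%VS by rewrite subv_cap CSi.
  by rewrite (ltn_leqif (dimv_leqif_eq CSit)) eq_sym.
have capiT t : t \in T -> (S i :&: S t)%VS = C.
  by move=> tT; apply/eqP/negPn/negP => neqC; apply: capC; exists t.
suff iT_ok : (i |: T \subset A) && pairwise_cap C (i |: T).
  by move: iNT; rewrite -(maxsetsup maxT iT_ok (subsetUr _ _)) setU11.
rewrite subUset sub1set iA TA; apply/pairwise_capP.
move=> x y /setU1P[->|xT] /setU1P[->|yT]; rewrite ?eqxx // => xy.
- exact: capiT.
- by rewrite capvC capiT.
- by move/pairwise_capP: capT; apply.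
Qed.

Lemma sunflower_or_small_cover s C A :
    {in A, forall i, (C <= S i)%VS /\ \dim C < \dim (S i)} ->
  (exists I, s <= #|I| /\ sunflower S I) \/
  exists T, [/\ T \subset A, #|T| < s &
    {in A, forall i, exists2 t, t \in T & \dim C < \dim (S i :&: S t)}].
Proof.
move=> hA; have [T [TA capT cover]] := exists_maximal_pairwise_cap hA.
have [sT | Ts] := leqP s #|T|; [left | right]; exists T => //; split=> //.
by apply: sunflower_of_pairwise_cap capT => i /(subsetP TA)/hA[].
Qed.

Lemma sunflower_of_codim1_family s C A :
    {in A, forall i, (C <= S i)%VS /\ \dim (S i) = (\dim C).+1} ->
    s * s <= #|A| ->
  exists I, s <= #|I| /\ sunflower S I.
Proof.
move=> hA bigA.
have ltC_S : {in A, forall i, (C <= S i)%VS /\ \dim C < \dim (S i)}.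
  by move=> i /hA[-> ->].
have [//|[T [TA Ts cover]]] := sunflower_or_small_cover s ltC_S.
have same i t : i \in A -> t \in A -> \dim C < \dim (S i :&: S t) -> S i = S t.
  move=> /hA[_ dim_i] /hA[_ dim_t] ltC; apply/eqP; rewrite eqEdim dim_i dim_t leqnn andbT.
  have : \dim (S i) <= \dim (S i :&: S t) by rewrite dim_i.
  by rewrite (geq_leqif (dimv_leqif_sup (capvSl _ _))) subv_cap => /andP[].
have cover_eq i : i \in A -> exists2 t, t \in T & S i == S t.
  move=> iA; have [t tT ltC] := cover i iA; exists t => //.
  by rewrite (same i t) // (subsetP TA).
have [|t tT many] := pigeonhole_rel cover_eq (n := s.-1).
  apply: leq_ltn_trans (leq_mul (leqnn _) (leq_pred s)) (leq_trans _ bigA).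
  by rewrite ltn_mul2r Ts (leq_ltn_trans _ Ts).
exists [set i in A | S i == S t]; split; first by case: (s) many.
by apply: (@sunflower_const _ (S t)) => i; rewrite inE => /andP[_ /eqP].
Qed.

End Sunflowers.

Fixpoint sunflower_bound (q s d : nat) : nat :=
  if d is d'.+1 then s * q ^ d.+1 * sunflower_bound q s d' else s * s.

Lemma sunflower_boundS q s d :
  sunflower_bound q s d.+1 = s * q ^ d.+2 * sunflower_bound q s d.
Proof. by []. Qed.

Lemma sunflower_bound_gt0 q s d : 0 < q -> 0 < s -> 0 < sunflower_bound q s d.
Proof.
move=> q_gt0 s_gt0; elim: d => [|d IH]; first by rewrite muln_gt0 s_gt0.
by rewrite sunflower_boundS muln_gt0 IH andbT muln_gt0 s_gt0 expn_gt0 q_gt0.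
Qed.

Lemma sunflower_boundE q s d :
  sunflower_bound q s d = s ^ d.+2 * q ^ ((d.+1 ^ 2 + d.+1 - 2) %/ 2).
Proof.
elim: d => [|d IH]; first by rewrite /= expn0 muln1.
have -> : d.+2 ^ 2 + d.+2 - 2 = (d.+1 ^ 2 + d.+1 - 2) + d.+2 * 2 by rewrite -!mulnn; lia.
by rewrite sunflower_boundS IH divnDr ?dvdn_mull // mulnK // expnD !expnS; lia.
Qed.

Section FiniteField.
Variables (K : finFieldType) (m N : nat) (S : 'I_N -> {vspace 'rV[K]_m}).
Implicit Types (C : {vspace 'rV[K]_m}) (A I T : {set 'I_N}).

Lemma exists_vector_in_many d C A T n :
    {in A, forall i, (C <= S i)%VS /\ \dim (S i) = \dim C + d} -> T \subset A ->
    {in A, forall i, exists2 t, t \in T & \dim C < \dim (S i :&: S t)} ->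
    #|T| * #|K| ^ d * n < #|A| ->
  exists2 w, w \notin C & n < #|[set i in A | w \in S i]|.
Proof.
move=> hA TA cover bigA.
pose W t := (S t :\: C)%VS.
have dimW t : t \in T -> \dim (W t) = d.
  move=> /(subsetP TA)/hA[CSt dimSt].
  by have := dimv_cap_compl (S t) C; rewrite (capv_idPr CSt) -/(W t); lia.
pose P := [set y : 'I_N * 'rV[K]_m | (y.1 \in T) && (y.2 \in W y.1)].
have cardP : #|P| = #|T| * #|K| ^ d.
  rewrite (card_pairs_dep T (fun t => W t : {pred _})) -sum_nat_const.
  apply: eq_bigr => t tT.
  by rewrite card_vspace dimW.
have coverP i : i \in A -> exists2 y, y \in P & (y.2 != 0%R) && (y.2 \in S i).
  move=> iA; have [t tT ltC] := cover i iA.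
  have [CSt _] := hA t (subsetP TA t tT).
  have := capv_diffv_neq0 CSt ltC; rewrite -/(W t) -vpick0 => w_neq0.
  have := memv_pick (S i :&: W t)%VS; rewrite memv_cap => /andP[wSi wW].
  by exists (t, vpick (S i :&: W t)%VS); rewrite ?inE /= ?tT ?w_neq0.
have [|[t w] + many] := pigeonhole_rel coverP (n := n); first by rewrite cardP.
rewrite inE /= => /andP[tT wW].
have w_neq0 : w != 0%R.
  apply: contraTneq many => ->; rewrite -leqNgt (@leq_trans 0) // leqn0 cards_eq0.
  by apply/eqP/setP => i; rewrite !inE /= eqxx andbF.
exists w.
  apply: contra w_neq0 => wC.
  by rewrite -memv0 -(capv_diff (S t) C) memv_cap wW.
by apply: leq_trans many _; apply/subset_leq_card/subsetP => i; rewrite !inE w_neq0.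
Qed.

Lemma sunflower_of_codim_family s d C A :
    {in A, forall i, (C <= S i)%VS /\ \dim (S i) = \dim C + d.+1} ->
    sunflower_bound #|K| s d <= #|A| ->
  exists I, s <= #|I| /\ sunflower S I.
Proof.
elim: d C A => [|d IH] C A hA bigA.
  by apply: (@sunflower_of_codim1_family _ _ _ S s C A) => // i /hA[-> ->]; rewrite addn1.
have ltC_S : {in A, forall i, (C <= S i)%VS /\ \dim C < \dim (S i)}.
  by move=> i /hA[CSi ->]; split=> //; rewrite -[X in X < _]addn0 ltn_add2l.
have [//|[T [TA Ts cover]]] := sunflower_or_small_cover s ltC_S.
have q_gt0 : 0 < #|K| by apply/card_gt0P; exists 0%R.
have G_gt0 := sunflower_bound_gt0 d q_gt0 (leq_ltn_trans (leq0n _) Ts).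
have [|w wNC many] := exists_vector_in_many hA TA cover
  (n := (sunflower_bound #|K| s d).-1).
  apply: leq_ltn_trans (leq_mul (leqnn _) (leq_pred _)) (leq_trans _ bigA).
  by rewrite sunflower_boundS ltn_mul2r G_gt0 ltn_mul2r expn_gt0 q_gt0 Ts.
apply: (IH (C + <[w]>)%VS [set i in A | w \in S i]); last by rewrite -(prednK G_gt0).
move=> i; rewrite inE => /andP[/hA[CSi dimSi] wSi].
by rewrite subv_add CSi -memvE wSi dimv_add_line // dimSi addSnnS.
Qed.

End FiniteField.

Theorem lemma3p20 (p m k s N : nat) (S : 'I_N -> {vspace 'rV['F_p]_m}) :
  prime p -> (1 <= k)%N -> (k < m)%N -> (1 <= s)%N ->
  (forall i, \dim (S i) = k) ->
  (s ^ (k + 1) * p ^ ((k ^ 2 + k - 2) %/ 2) <= N)%N ->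
  exists I : {set 'I_N}, (s <= #|I|)%N /\ sunflower S I.
Proof.
move=> p_prime k_gt0 _ _ dimS bigN.
have [d def_k] : exists d, k = d.+1 by exists k.-1; rewrite prednK.
apply: (@sunflower_of_codim_family _ _ _ S s d 0%VS [set: 'I_N]).
  by move=> i _; rewrite sub0v dimv0 dimS def_k.
by rewrite sunflower_boundE card_Fp // cardsT card_ord -def_k -addn1.
Qed.
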